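(* Let $C_{12},C_{13},C_{23}$ be compatible bivariate copulas and let $C_L,C_U$ be defined as below. Define \[ F_U(u_1,u_2,u_3)=\min\{C_{12}(u_1,u_2),\,C_{13}(u_1,u_3),\,C_{23}(u_2,u_3),\,1-u_1-u_2-u_3+C_{12}(u_1,u_2)+C_{13}(u_1,u_3)+C_{23}(u_2,u_3)\}, \] \[ F_L(u_1,u_2,u_3)=\max\{0,\,C_{12}(u_1,u_2)+C_{13}(u_1,u_3)-u_1,\,C_{12}(u_1,u_2)+C_{23}(u_2,u_3)-u_2,\,C_{13}(u_1,u_3)+C_{23}(u_2,u_3)-u_3\}. \] Then for every $\mathbf u\in[0,1]^3$, $C_L(\mathbf u)\ge F_L(\mathbf u)$ and $C_U(\mathbf u)\le F_U(\mathbf u)$.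
   Context: A bivariate copula is a distribution function on $[0,1]^2$ with uniform $[0,1]$ marginals. Bivariate copulas $C_{12},C_{13},C_{23}$ are compatible if there is a distribution function $\widetilde C$ on $[0,1]^3$ with uniform marginals such that $\widetilde C(u_1,u_2,1)=C_{12}(u_1,u_2)$, $\widetilde C(u_1,1,u_3)=C_{13}(u_1,u_3)$, $\widetilde C(1,u_2,u_3)=C_{23}(u_2,u_3)$. Let $C_{ji}(u,v):=C_{ij}(v,u)$ for $i<j$, $W_2(u,v)=\max\{u+v-1,0\}$, $M_2(u,v)=\min\{u,v\}$, and for bivariate copulas $A,B,C$: $(A\ast_{C} B)(x,z)=\int_{0}^{1} C(\tfrac{\partial}{\partial t} A(x,t),\tfrac{\partial}{\partial t} B(t,z))\, dt$, $(A\star_{C} B)(x,y,z)=\int_{0}^{y} C(\tfrac{\partial}{\partial t} A(x,t),\tfrac{\partial}{\partial t} B(t,z))\, dt$ (partial derivatives a.e.). With $\mathcal P=\{(1,2,3),(1,3,2),(2,1,3)\}$, $C_L(u_1,u_2,u_3)=\max_{(i,j,k)\in\mathcal P}\max\{(C_{ij}\star_{W_2}C_{jk})(u_i,u_j,u_k),\ (C_{ij}\star_{M_2}C_{jk})(u_i,u_j,u_k)+C_{ik}(u_i,u_k)-(C_{ij}\ast_{M_2}C_{jk})(u_i,u_k)\}$ and $C_U(u_1,u_2,u_3)=\min_{(i,j,k)\in\mathcal P}\min\{(C_{ij}\star_{M_2}C_{jk})(u_i,u_j,u_k),\ (C_{ij}\star_{W_2}C_{jk})(u_i,u_j,u_k)+C_{ik}(u_i,u_k)-(C_{ij}\ast_{W_2}C_{jk})(u_i,u_k)\}$.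 *)

From HB Require Import structures.
From mathcomp Require Import all_boot all_order all_algebra.
From mathcomp Require Import all_classical all_reals all_analysis.
Set Implicit Arguments. Unset Strict Implicit. Unset Printing Implicit Defensive.
Import Order.TTheory GRing.Theory Num.Theory.
Import numFieldNormedType.Exports.
Local Open Scope classical_set_scope.
Local Open Scope ring_scope.

Section Copulas.
Variable R : realType.

Definition in01 (x : R) := 0 <= x <= 1.

(* bivariate copula: a distribution function on [0,1]^2 with uniform marginals
   (grounded, uniform margins, 2-increasing); values off [0,1]^2 are irrelevant *)
Definition is_copula2 (C : R -> R -> R) : Prop :=
  (forall u, in01 u -> C u 0 = 0 /\ C 0 u = 0 /\ C u 1 = u /\ C 1 u = u) /\
  (forall u1 u2 v1 v2, in01 u1 -> in01 u2 -> in01 v1 -> in01 v2 ->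
     u1 <= u2 -> v1 <= v2 -> 0 <= C u2 v2 - C u2 v1 - C u1 v2 + C u1 v1).

Definition is_copula3 (C : R -> R -> R -> R) : Prop :=
  (forall u v, in01 u -> in01 v ->
     C 0 u v = 0 /\ C u 0 v = 0 /\ C u v 0 = 0) /\
  (forall u, in01 u -> C u 1 1 = u /\ C 1 u 1 = u /\ C 1 1 u = u) /\
  (forall a1 b1 a2 b2 a3 b3, in01 a1 -> in01 b1 -> in01 a2 -> in01 b2 ->
     in01 a3 -> in01 b3 -> a1 <= b1 -> a2 <= b2 -> a3 <= b3 ->
     0 <= C b1 b2 b3 - C a1 b2 b3 - C b1 a2 b3 - C b1 b2 a3
          + C a1 a2 b3 + C a1 b2 a3 + C b1 a2 a3 - C a1 a2 a3).

Definition compatible (C12 C13 C23 : R -> R -> R) : Prop :=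
  exists Ct : R -> R -> R -> R, is_copula3 Ct /\
    forall u v, in01 u -> in01 v ->
      Ct u v 1 = C12 u v /\ Ct u 1 v = C13 u v /\ Ct 1 u v = C23 u v.

Definition W2 (u v : R) : R := Num.max (u + v - 1) 0.
Definition M2 (u v : R) : R := Num.min u v.

(* partial derivatives (taken to be 0 where they do not exist; this only
   affects a null set, the paper's "a.e.") *)
Definition pd2 (A : R -> R -> R) (x t : R) : R :=
  if `[< derivable (fun s => A x s) t 1 >] then 'D_1 (fun s => A x s) t else 0.
Definition pd1 (B : R -> R -> R) (t z : R) : R :=
  if `[< derivable (fun s => B s z) t 1 >] then 'D_1 (fun s => B s z) t else 0.

Definition astar (C A B : R -> R -> R) (x z : R) : R :=
  \int[lebesgue_measure]_(t in [set t : R | 0 <= t <= 1])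
     C (pd2 A x t) (pd1 B t z).

Definition sstar (C A B : R -> R -> R) (x y z : R) : R :=
  \int[lebesgue_measure]_(t in [set t : R | 0 <= t <= y])
     C (pd2 A x t) (pd1 B t z).

Definition flip (C : R -> R -> R) : R -> R -> R := fun u v => C v u.

(* the two terms for one triple (i,j,k) with copulas Cij, Cjk, Cik and
   arguments (ui,uj,uk) *)
Definition lowterm (Cij Cjk Cik : R -> R -> R) (ui uj uk : R) : R :=
  Num.max (sstar W2 Cij Cjk ui uj uk)
          (sstar M2 Cij Cjk ui uj uk + Cik ui uk - astar M2 Cij Cjk ui uk).
Definition upterm (Cij Cjk Cik : R -> R -> R) (ui uj uk : R) : R :=
  Num.min (sstar M2 Cij Cjk ui uj uk)
          (sstar W2 Cij Cjk ui uj uk + Cik ui uk - astar W2 Cij Cjk ui uk).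

(* P = {(1,2,3),(1,3,2),(2,1,3)} ; C_ji(u,v) = C_ij(v,u) *)
Definition CL (C12 C13 C23 : R -> R -> R) (u1 u2 u3 : R) : R :=
  Num.max (lowterm C12 C23 C13 u1 u2 u3)
    (Num.max (lowterm C13 (flip C23) C12 u1 u3 u2)
             (lowterm (flip C12) C13 C23 u2 u1 u3)).
Definition CU (C12 C13 C23 : R -> R -> R) (u1 u2 u3 : R) : R :=
  Num.min (upterm C12 C23 C13 u1 u2 u3)
    (Num.min (upterm C13 (flip C23) C12 u1 u3 u2)
             (upterm (flip C12) C13 C23 u2 u1 u3)).

Definition FU (C12 C13 C23 : R -> R -> R) (u1 u2 u3 : R) : R :=
  Num.min (C12 u1 u2) (Num.min (C13 u1 u3) (Num.min (C23 u2 u3)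
    (1 - u1 - u2 - u3 + C12 u1 u2 + C13 u1 u3 + C23 u2 u3))).
Definition FL (C12 C13 C23 : R -> R -> R) (u1 u2 u3 : R) : R :=
  Num.max 0 (Num.max (C12 u1 u2 + C13 u1 u3 - u1)
    (Num.max (C12 u1 u2 + C23 u2 u3 - u2) (C13 u1 u3 + C23 u2 u3 - u3))).

End Copulas.

(* For a copula C and x in [0,1] the section s |-> C(x,s) vanishes at
   0 and is nondecreasing and 1-Lipschitz on [0,1], hence it is the integral of
   a density g >= 0 (Radon-Nikodym for its Lebesgue-Stieltjes measure), and by
   Lebesgue differentiation its derivative equals g almost everywhere.  Thus
   the star products are integrals of M2 and W2 applied to two such densities,
   and integrating min(a,b) <= a, b and max(a+b-1,0) >= 0, a+b-1 over [0,y]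
   and over ]y,1] gives every term of F_L and F_U as a bound on one term of
   C_L or C_U. *)
From HB Require Import structures.
From mathcomp Require Import all_boot all_order all_algebra.
From mathcomp Require Import all_classical all_reals all_analysis.
From mathcomp Require Import measurable_realfun lra.
Set Implicit Arguments.
Unset Strict Implicit.
Unset Printing Implicit Defensive.
Import Order.TTheory GRing.Theory Num.Theory.
Import numFieldNormedType.Exports.
Local Open Scope classical_set_scope.
Local Open Scope ring_scope.

Section ae_eq_integral_nonmeasurable.
Context d (T : measurableType d) (R : realType) (mu : {measure set T -> \bar R}).
Local Open Scope ereal_scope.

Lemma ge0_le_integral_nonmeasurable (D : set T) (f1 f2 : T -> \bar R) :
  (forall x, D x -> 0 <= f1 x) -> (forall x, D x -> f1 x <= f2 x) ->
  \int[mu]_(x in D) f1 x <= \int[mu]_(x in D) f2 x.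
Proof.
move=> f10 f12.
have f20 x : D x -> 0 <= f2 x by move=> Dx; exact: le_trans (f10 x Dx) (f12 x Dx).
rewrite (ge0_integralE _ f10) (ge0_integralE _ f20).
apply: ereal_sup_le => _ [h hf <-]; exists h => // x.
apply: le_trans (hf x) _; rewrite /patch; case: ifPn => // /set_mem; exact: f12.
Qed.

Lemma measurable_fun_mem (D N : set T) : measurable D -> measurable N ->
  measurable_fun D (fun x => x \in N).
Proof.
move=> mD mN; apply: (measurable_fun_bool true).
suff -> : D `&` (fun x => x \in N) @^-1` [set true] = D `&` N by exact: measurableI.
apply/seteqP; split => x [Dx /= Nx]; split => //.
- by move: Nx; rewrite /preimage /= => /eqP; rewrite eqb_id => /set_mem.
- by rewrite /preimage /= (mem_set Nx).
Qed.

(* Unlike in [ae_eq_integral], [f] need not be measurable: it is squeezed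
   between two measurable modifications of [g] on the null set. *)
Lemma ge0_ae_eq_integral_measurable_r (D : set T) (f g : T -> \bar R) :
  measurable D -> measurable_fun D g ->
  (forall x, D x -> 0 <= f x) -> (forall x, D x -> 0 <= g x) ->
  ae_eq mu D f g -> \int[mu]_(x in D) f x = \int[mu]_(x in D) g x.
Proof.
move=> mD mg f0 g0 [N [mN N0 subN]].
have fg x : D x -> x \notin N -> f x = g x.
  move=> Dx /negP xN; apply: contra_notP xN => fgx; apply/mem_set/subN.
  by move=> /(_ Dx).
pose g_ c x := if x \in N then c else g x.
have mg_ c : measurable_fun D (g_ c).
  apply: measurable_fun_if => //; first exact: measurable_fun_mem.
  by apply: measurable_funS mg => //; exact: subIsetl.
have g_E c : \int[mu]_(x in D) g_ c x = \int[mu]_(x in D) g x.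
  apply: ae_eq_integral => //; exists N; split => // x /= /not_implyP[Dx].
  by rewrite /g_; case: ifPn => [/set_mem //|_ /(_ erefl)].
apply/eqP; rewrite eq_le; apply/andP; split.
  rewrite -(g_E +oo); apply: ge0_le_integral_nonmeasurable => // x Dx.
  by rewrite /g_; case: ifPn => [_|xN]; [exact: leey|rewrite fg].
rewrite -(g_E 0); apply: ge0_le_integral_nonmeasurable => x Dx; rewrite /g_.
  by case: ifPn => // _; exact: g0.
by case: ifPn => [_|xN]; [exact: f0|rewrite fg].
Qed.

Lemma ae_eq_integral_measurable_r (D : set T) (f g : T -> \bar R) :
  measurable D -> measurable_fun D g ->
  ae_eq mu D f g -> \int[mu]_(x in D) f x = \int[mu]_(x in D) g x.
Proof.
move=> mD mg /ae_eq_funeposneg[fgp fgn]; rewrite integralE [RHS]integralE.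
congr (_ - _); apply: ge0_ae_eq_integral_measurable_r => //.
- exact: measurable_funepos.
- exact: measurable_funeneg.
Qed.

End ae_eq_integral_nonmeasurable.

Section nondecr_1lipschitz.
Context {R : realType}.
Local Notation mu := (@lebesgue_measure R).

Definition nondecr_1lip (f : R -> R) : Prop :=
  forall s t, s <= t -> f s <= f t /\ f t - f s <= t - s.

Definition nondecr_1lip01 (f : R -> R) : Prop :=
  forall s t, 0 <= s -> s <= t -> t <= 1 -> f s <= f t /\ f t - f s <= t - s.

Definition clamp01 (t : R) : R := Num.min (Num.max t 0) 1.

Lemma clamp01_in01 t : 0 <= clamp01 t <= 1.
Proof. rewrite /clamp01 !(maxEle, minEle); do ?case: ifPn; lra. Qed.

Lemma clamp01_id t : 0 <= t <= 1 -> clamp01 t = t.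
Proof. rewrite /clamp01 !(maxEle, minEle); do ?case: ifPn; lra. Qed.

Lemma nondecr_1lip_clamp01 : nondecr_1lip clamp01.
Proof. move=> s t; rewrite /clamp01 !(maxEle, minEle); do ?case: ifPn; lra. Qed.

Lemma nondecr_1lip01_clamp01 f : nondecr_1lip01 f -> nondecr_1lip (f \o clamp01).
Proof.
move=> f_lip s t st; have [cst dst] := nondecr_1lip_clamp01 st.
have /andP[cs0 cs1] := clamp01_in01 s; have /andP[ct0 ct1] := clamp01_in01 t.
have [fst dfst] := f_lip _ _ cs0 cst ct1.
by rewrite /=; split => //; lra.
Qed.

Lemma nondecr_1lip_continuous f : nondecr_1lip f -> continuous f.
Proof.
move=> f_lip x; apply/(@cvgrPdist_le _ R^o) => e e0; near=> y.
have : `|x - y| <= e.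
  by near: y; exact: (@cvgr_dist_le _ R^o _ _ _ id x (@cvg_id _ _) e e0).
have [xy|/ltW yx] := leP x y.
- by have [? ?] := f_lip _ _ xy; rewrite !ler0_norm; lra.
- by have [? ?] := f_lip _ _ yx; rewrite !ger0_norm; lra.
Unshelve. all: by end_near. Qed.

Lemma lebesgue_stieltjes_measure_le (F : cumulative R R) (A : set R) :
  nondecr_1lip F -> (lebesgue_stieltjes_measure F A <= mu A)%E.
Proof.
move=> F_lip; rewrite /lebesgue_measure /lebesgue_stieltjes_measure.
rewrite /measure_extension /mu_ext; apply/ereal_infP => _ [B [mB AB] <-].
apply: ge_ereal_inf; exists (\sum_(k <oo) wlength F (B k))%E; first by exists B.
apply: lee_nneseries => [*|n _]; first exact: wlength_ge0.
have /ocitvP[->|[[a b] /= ab ->]] := mB n; first by rewrite !wlength0.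
by rewrite !wlength_itv /= lte_fin ab lee_fin; have [] := F_lip _ _ (ltW ab).
Qed.

End nondecr_1lipschitz.

(* The library hint does not find this instance for the Lebesgue measure. *)
#[local] Instance lebesgue_ae_filter (R : realType) :
  Filter (nbhs (almost_everywhere (@lebesgue_measure R))) := ae_filter_ringOfSetsType _.

Section density.
Context {R : realType}.
Local Notation mu := (@lebesgue_measure R).

Definition pd (f : R -> R) (t : R) : R :=
  if `[< derivable f t 1 >] then 'D_1 f t else 0.

Section nondecr_1lip01_integral.
Variable f : R -> R.
Hypothesis f_lip : nondecr_1lip01 f.

Let fc := f \o clamp01.

Let fc_nd : {homo fc : x y / x <= y}.
Proof. by move=> x y /(nondecr_1lip01_clamp01 f_lip)[]. Qed.

Let fc_rc : right_continuous fc.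
Proof.
by apply: right_continuousW; apply: nondecr_1lip_continuous; exact: nondecr_1lip01_clamp01.
Qed.

Let F : cumulative R R := HB.pack fc (isCumulative.Build R _ R fc fc_nd fc_rc).

Let nu : {measure set (measurableTypeR R) -> \bar R} := lebesgue_stieltjes_measure F.

Let nu_itv_oc (a b : R) : a <= b -> nu `]a, b]%classic = (fc b - fc a)%:E.
Proof.
move=> ab; rewrite [LHS]/= /lebesgue_stieltjes_measure /measure_extension.
rewrite measurable_mu_extE /=; last exact: is_ocitv.
by rewrite wlength_itv /= lte_fin; case: ltgtP ab => //= -> _; rewrite subrr.
Qed.

Let m01 : measurable (`]0, 1]%classic : set (measurableTypeR R)).
Proof. exact: measurable_itv. Qed.

Let nu01_fin : (nu `]0%R, 1%R]%classic < +oo)%E.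
Proof. by rewrite nu_itv_oc ?ler01 // ltry. Qed.

Let nu01 : {finite_measure set (measurableTypeR R) -> \bar R} := mfrestr m01 nu01_fin.

Let nu01_abs : nu01 `<< mu.
Proof.
move=> A muA B mB BA; apply/eqP; rewrite eq_le measure_ge0 andbT -(muA B mB BA).
apply: le_trans (lebesgue_stieltjes_measure_le (F := F) B _); last first.
  exact: nondecr_1lip01_clamp01.
by rewrite /= /mfrestr /mrestr /= le_measure ?inE //; exact: measurableI.
Qed.

Lemma nondecr_1lip01_integral : exists g : R -> R,
  [/\ mu.-integrable setT (EFin \o g), (forall x, 0 <= g x) &
      forall y, 0 <= y <= 1 -> \int[mu]_(t in `[0, y]) g t = f y - f 0].
Proof.
have [ge [ge0 gfin gint gE]] := radon_nikodym_sigma_finite nu01_abs.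
have geE : EFin \o (fine \o ge) = ge by apply/funext => x /=; rewrite fineK.
exists (fine \o ge); split; first by rewrite geE.
  by move=> x; apply: fine_ge0; exact: ge0.
move=> y /andP[y0 y1]; rewrite /Rintegral (eq_integral ge); last first.
  by move=> x _; rewrite /= fineK.
rewrite -gE; last exact: measurable_itv.
rewrite /= /mfrestr /mrestr /=.
have -> : `[0%R, y]%classic `&` `]0%R, 1%R]%classic = `]0%R, y]%classic :> set R.
  apply/seteqP; split => x /=; rewrite !in_itv /=; first by move=> [/andP[_ ->] /andP[->]].
  by move=> /andP[x0 xy]; rewrite xy (ltW x0) x0 (le_trans xy y1).
rewrite /= nu_itv_oc //= /fc /= clamp01_id ?y0 ?y1 //.
by rewrite clamp01_id ?lexx ?ler01.
Qed.

End nondecr_1lip01_integral.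

Lemma ae_neq (r : R) : \forall t \ae mu, t != r.
Proof.
exists [set r]; split; [exact: measurable_set1|exact: lebesgue_measure_set1|].
by move=> t /= /negP; rewrite negbK => /eqP.
Qed.

Lemma ae_eq_pd_integrand (f g : R -> R) : mu.-integrable setT (EFin \o g) ->
  (forall y, 0 <= y <= 1 -> \int[mu]_(t in `[0, y]) g t = f y - f 0) ->
  pd f = g %[ae mu in `[0, 1]%classic].
Proof.
move=> gint gI.
have gint0 y : mu.-integrable [set` Interval (BLeft 0) (BRight y)] (EFin \o g).
  by apply: integrableS gint => //; exact: measurable_itv.
have gloc : locally_integrable [set: R] g.
  by have := integrable_locally measurableT gint; rewrite patch_setT.
have ftc := FTC1 gint0 gloc.
set F := (fun x => _) in ftc; rewrite /= in ftc.
have pdE t : 0 <= t <= 1 -> t != 0 -> t != 1 ->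
    ((0%:E < t%:E)%E -> derivable F t 1 /\ (F^`())%classic t = g t) ->
    pd f t = g t.
  move=> /andP[t0 t1] tn0 tn1 Fdt.
  have t01 : t \in `]0, 1[ by rewrite in_itv /= lt_def tn0 t0 lt_neqAle tn1 t1.
  have [dF dFg] : derivable F t 1 /\ (F^`())%classic t = g t.
    by apply: Fdt; rewrite lte_fin lt_def tn0 t0.
  have Fd : is_derive t 1 (F + cst (f 0)) (g t).
    rewrite -[g t]addr0; apply: is_deriveD.
    by apply: DeriveDef => //; rewrite -derive1E.
  have fd : is_derive t 1 f (g t).
    apply: near_eq_is_derive Fd.
    apply: filterS (near_in_itvoo t01) => s; rewrite in_itv /= => /andP[s0 s1].
    by change (F s + f 0 = f s); rewrite /F gI ?subrK // !ltW.
  by rewrite /pd asboolT ?derive_val //; exact: ex_derive fd.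
near=> t => t01; apply: pdE.
- by move: t01; rewrite /= in_itv.
- exact: (near (ae_neq 0) t).
- exact: (near (ae_neq 1) t).
- exact: (near ftc t).
Unshelve. all: by end_near. Qed.

Definition density01 (f g : R -> R) : Prop :=
  [/\ mu.-integrable setT (EFin \o g), (forall x, 0 <= g x),
      (forall y, 0 <= y <= 1 -> \int[mu]_(t in `[0, y]) g t = f y - f 0) &
      pd f = g %[ae mu in `[0, 1]%classic]].

Lemma nondecr_1lip01_density (f : R -> R) :
  nondecr_1lip01 f -> exists g : R -> R, density01 f g.
Proof.
move=> /nondecr_1lip01_integral[g [gint g0 gI]]; exists g; split => //.
exact: ae_eq_pd_integrand.
Qed.

End density.

Section W2_integral.
Context d (T : measurableType d) (R : realType) (mu : {measure set T -> \bar R}).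

Lemma Rintegral_W2_ge (D : set T) (g1 g2 : T -> R) : measurable D -> (mu D < +oo)%E ->
  mu.-integrable D (EFin \o g1) -> mu.-integrable D (EFin \o g2) ->
  mu.-integrable D (EFin \o (fun t => W2 (g1 t) (g2 t))) ->
  \int[mu]_(t in D) g1 t + \int[mu]_(t in D) g2 t - fine (mu D) <=
  \int[mu]_(t in D) W2 (g1 t) (g2 t).
Proof.
move=> mD muD i1 i2 iW.
have i12 : mu.-integrable D (EFin \o (g1 \+ g2)).
  by rewrite (_ : EFin \o _ = (EFin \o g1) \+ (EFin \o g2))%E //; exact: integrableD.
have i1' : mu.-integrable D (EFin \o cst 1).
  apply/integrableP; split; first exact/measurable_EFinP.
  by under eq_integral do rewrite /= normr1; rewrite integral_cst // mul1e.
rewrite -[fine (mu D)]mul1r -Rintegral_cst // -RintegralD // -RintegralB //.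
apply: le_Rintegral => //.
  by rewrite (_ : EFin \o _ = (EFin \o (g1 \+ g2)%R) \- (EFin \o cst 1%R))%E //; exact: integrableB.
by move=> t _; rewrite /W2 le_max lexx.
Qed.

End W2_integral.

Section star_integral.
Context {R : realType}.
Local Notation mu := (@lebesgue_measure R).

Lemma lebesgue_measure_itv_lty (a c : R) (b1 b2 : bool) :
  (mu [set` Interval (BSide b1 a) (BSide b2 c)] < +oo)%E.
Proof. by rewrite lebesgue_measure_itv; case: ifP => _; rewrite ltry. Qed.

Lemma fine_lebesgue_measure_itv (a c : R) (b1 b2 : bool) : a <= c ->
  fine (mu [set` Interval (BSide b1 a) (BSide b2 c)]) = c - a.
Proof.
rewrite lebesgue_measure_itv /= lte_fin.
by case: ltgtP => //= -> _; rewrite subrr.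
Qed.

Definition star_int (Phi : R -> R -> R) (f1 f2 : R -> R) (y : R) : R :=
  \int[mu]_(t in [set t : R | 0 <= t <= y]) Phi (pd f1 t) (pd f2 t).

Lemma star_int_W2_ge0 f1 f2 y : 0 <= star_int (@W2 R) f1 f2 y.
Proof. by apply: Rintegral_ge0 => t _; rewrite /W2 le_max lexx orbT. Qed.

Section star_int_density.
Variables f1 f2 g1 g2 : R -> R.
Hypotheses (dens1 : density01 f1 g1) (dens2 : density01 f2 g2).

Let g1_int : mu.-integrable setT (EFin \o g1). Proof. by case: dens1. Qed.
Let g2_int : mu.-integrable setT (EFin \o g2). Proof. by case: dens2. Qed.

Let g1_meas : measurable_fun setT g1.
Proof. by apply/measurable_EFinP; exact: measurable_int g1_int. Qed.
Let g2_meas : measurable_fun setT g2.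
Proof. by apply/measurable_EFinP; exact: measurable_int g2_int. Qed.

Lemma star_int_densityE Phi y : measurable_fun setT (fun t => Phi (g1 t) (g2 t)) ->
  0 <= y <= 1 -> star_int Phi f1 f2 y = \int[mu]_(t in `[0, y]) Phi (g1 t) (g2 t).
Proof.
move=> mPhi /andP[y0 y1].
rewrite /star_int /Rintegral; congr fine.
apply: (@ae_eq_integral_measurable_r _ _ _ mu `[0, y]%classic); first exact: measurable_itv.
  by apply/measurable_EFinP; apply: measurable_funS mPhi.
have sub : `[0, y]%classic `<=` `[0, 1]%classic.
  by move=> t; rewrite /= !in_itv /= => /andP[-> /le_trans ->].
have [_ _ _ pd1] := dens1; have [_ _ _ pd2] := dens2.
near=> t => /sub t01.
by rewrite /= (near pd1 t) ?(near pd2 t).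
Unshelve. all: by end_near.
Qed.

Let g1_ge0 x : 0 <= g1 x. Proof. by case: dens1. Qed.
Let g2_ge0 x : 0 <= g2 x. Proof. by case: dens2. Qed.

Let g1_itv y : 0 <= y <= 1 -> \int[mu]_(t in `[0, y]) g1 t = f1 y - f1 0.
Proof. by case: dens1 => _ _ gI _; exact: gI. Qed.
Let g2_itv y : 0 <= y <= 1 -> \int[mu]_(t in `[0, y]) g2 t = f2 y - f2 0.
Proof. by case: dens2 => _ _ gI _; exact: gI. Qed.

Lemma integrable_density_comp (Phi : R -> R -> R) :
  measurable_fun setT (fun t => Phi (g1 t) (g2 t)) ->
  (forall a b, 0 <= a -> 0 <= b -> `|Phi a b| <= a + b) ->
  mu.-integrable setT (EFin \o (fun t => Phi (g1 t) (g2 t))).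
Proof.
move=> mPhi Phi_le.
apply: (@le_integrable _ _ _ mu setT measurableT _ (EFin \o (g1 \+ g2))).
- exact/measurable_EFinP.
- move=> t _; change (`|(Phi (g1 t) (g2 t))%:E| <= `|(g1 t + g2 t)%:E|)%E.
  by rewrite !abse_EFin lee_fin (ger0_norm (addr_ge0 _ _)) //; exact: Phi_le.
- by rewrite (_ : EFin \o _ = (EFin \o g1) \+ (EFin \o g2))%E //; exact: integrableD.
Qed.

Let M2_meas : measurable_fun setT (fun t => M2 (g1 t) (g2 t)).
Proof. exact: measurable_minr. Qed.

Let W2_meas : measurable_fun setT (fun t => W2 (g1 t) (g2 t)).
Proof.
apply: measurable_maxr => //; apply: measurable_funB => //; exact: measurable_funD.
Qed.

Let M2_int : mu.-integrable setT (EFin \o (fun t => M2 (g1 t) (g2 t))).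
Proof.
apply: integrable_density_comp => // a b a0 b0.
by rewrite /M2 ger0_norm ?le_min ?a0 ?b0 // ge_min lerDl b0.
Qed.

Let W2_int : mu.-integrable setT (EFin \o (fun t => W2 (g1 t) (g2 t))).
Proof.
apply: integrable_density_comp => // a b a0 b0.
rewrite /W2 ger0_norm; last by rewrite le_max lexx orbT.
by rewrite ge_max addr_ge0 // andbT lerBlDr lerDl.
Qed.

Lemma star_int_M2_le_l y : 0 <= y <= 1 -> star_int (@M2 R) f1 f2 y <= f1 y - f1 0.
Proof.
move=> y01; rewrite star_int_densityE // -g1_itv //.
apply: le_Rintegral; [exact: measurable_itv|exact: integrableS M2_int|
  exact: integrableS g1_int|].
by move=> t _; rewrite /M2 ge_min lexx.
Qed.

Lemma star_int_M2_le_r y : 0 <= y <= 1 -> star_int (@M2 R) f1 f2 y <= f2 y - f2 0.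
Proof.
move=> y01; rewrite star_int_densityE // -g2_itv //.
apply: le_Rintegral; [exact: measurable_itv|exact: integrableS M2_int|
  exact: integrableS g2_int|].
by move=> t _; rewrite /M2 ge_min lexx orbT.
Qed.

Lemma star_int_W2_ge y : 0 <= y <= 1 ->
  f1 y - f1 0 + (f2 y - f2 0) - y <= star_int (@W2 R) f1 f2 y.
Proof.
move=> /[dup] y01 /andP[y0 _].
rewrite star_int_densityE // -g1_itv // -g2_itv //.
have := Rintegral_W2_ge (mu := mu) (measurable_itv `[0, y]) (lebesgue_measure_itv_lty 0 y _ _).
by rewrite fine_lebesgue_measure_itv // subr0; apply;
  [exact: integrableS g1_int|exact: integrableS g2_int|exact: integrableS W2_int].
Qed.

Lemma star_int_W2_increment_ge y : 0 <= y <= 1 ->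
  f1 1 - f1 y + (f2 1 - f2 y) - (1 - y) <=
  star_int (@W2 R) f1 f2 1 - star_int (@W2 R) f1 f2 y.
Proof.
move=> /[dup] y01 /andP[y0 y1]; have o1 : 0 <= (1 : R) <= 1 by rewrite ler01 lexx.
have itvB h : mu.-integrable setT (EFin \o h) ->
    \int[mu]_(t in `[0, 1]) h t - \int[mu]_(t in `[0, y]) h t =
    \int[mu]_(t in `]y, 1]) h t.
  move=> hint; apply: Rintegral_itvB; rewrite ?bnd_simp //.
  exact: integrableS hint.
have -> : f1 1 - f1 y = \int[mu]_(t in `]y, 1]) g1 t.
  by rewrite -itvB // !g1_itv // opprB addrA subrK.
have -> : f2 1 - f2 y = \int[mu]_(t in `]y, 1]) g2 t.
  by rewrite -itvB // !g2_itv // opprB addrA subrK.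
rewrite !star_int_densityE // itvB //.
have := Rintegral_W2_ge (mu := mu) (measurable_itv `]y, 1]) (lebesgue_measure_itv_lty y 1 _ _).
by rewrite fine_lebesgue_measure_itv //; apply;
  [exact: integrableS g1_int|exact: integrableS g2_int|exact: integrableS W2_int].
Qed.

End star_int_density.
End star_integral.

Section copula_star.
Context {R : realType}.
Implicit Types (A B C : R -> R -> R) (x y z : R).

Lemma is_copula2_flip C : is_copula2 C -> is_copula2 (flip C).
Proof.
move=> [margin incr]; split=> [u /margin[? [? [? ?]]] //|u1 u2 v1 v2 hu1 hu2 hv1 hv2 u12 v12].
by have := incr v1 v2 u1 u2 hv1 hv2 hu1 hu2 v12 u12; rewrite /flip; lra.
Qed.

Lemma is_copula2_section C x : is_copula2 C -> in01 x ->
  C x 0 = 0 /\ nondecr_1lip01 (C x).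
Proof.
move=> [margin incr] x01; have [Cx0 _] := margin x x01.
split=> // s t s0 st t1.
have s01 : in01 s by rewrite /in01 s0 (le_trans st t1).
have t01 : in01 t by rewrite /in01 (le_trans s0 st) t1.
have i0 : in01 (0 : R) by rewrite /in01 lexx ler01.
have i1 : in01 (1 : R) by rewrite /in01 ler01 lexx.
have /andP[x0 x1] := x01.
have := incr 0 x s t i0 x01 s01 t01 x0 st.
have := incr x 1 s t x01 i1 s01 t01 x1 st.
have [_ [C0s [_ C1s]]] := margin s s01; have [_ [C0t [_ C1t]]] := margin t t01.
by rewrite C0s C0t C1s C1t; split; lra.
Qed.

Lemma sstarE Phi A B x y z :
  sstar Phi A B x y z = star_int Phi (A x) (flip B z) y.
Proof. by []. Qed.

Lemma astarE Phi A B x z :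
  astar Phi A B x z = star_int Phi (A x) (flip B z) 1.
Proof. by []. Qed.

Lemma sstar_W2_ge0 A B x y z : 0 <= sstar (@W2 R) A B x y z.
Proof. exact: star_int_W2_ge0. Qed.

Section two_copulas.
Variables (A B : R -> R -> R) (x y z : R).
Hypotheses (cA : is_copula2 A) (cB : is_copula2 B).
Hypotheses (x01 : in01 x) (y01 : in01 y) (z01 : in01 z).

Let A_sec : A x 0 = 0 /\ nondecr_1lip01 (A x).
Proof. exact: is_copula2_section. Qed.

Let B_sec : flip B z 0 = 0 /\ nondecr_1lip01 (flip B z).
Proof. by apply: is_copula2_section => //; exact: is_copula2_flip. Qed.

Lemma sstar_M2_le_l : sstar (@M2 R) A B x y z <= A x y.
Proof.
have [[A0 /nondecr_1lip01_density[g1 d1]] [_ /nondecr_1lip01_density[g2 d2]]] := (A_sec, B_sec).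
by have := star_int_M2_le_l d1 d2 y01; rewrite A0 subr0.
Qed.

Lemma sstar_M2_le_r : sstar (@M2 R) A B x y z <= B y z.
Proof.
have [[_ /nondecr_1lip01_density[g1 d1]] [B0 /nondecr_1lip01_density[g2 d2]]] := (A_sec, B_sec).
by have := star_int_M2_le_r d1 d2 y01; rewrite B0 subr0.
Qed.

Lemma sstar_W2_ge : A x y + B y z - y <= sstar (@W2 R) A B x y z.
Proof.
have [[A0 /nondecr_1lip01_density[g1 d1]] [B0 /nondecr_1lip01_density[g2 d2]]] := (A_sec, B_sec).
have := star_int_W2_ge d1 d2 y01.
by rewrite sstarE A0 B0 !subr0.
Qed.

Lemma astar_sub_sstar_W2_ge :
  x - A x y + (z - B y z) - (1 - y) <= astar (@W2 R) A B x z - sstar (@W2 R) A B x y z.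
Proof.
have [[_ /nondecr_1lip01_density[g1 d1]] [_ /nondecr_1lip01_density[g2 d2]]] := (A_sec, B_sec).
have := star_int_W2_increment_ge d1 d2 y01.
have [_ [_ [Ax1 _]]] := cA.1 x x01; have [_ [_ [_ B1z]]] := cB.1 z z01.
by rewrite astarE sstarE /flip Ax1 B1z.
Qed.

End two_copulas.

Lemma sstar_W2_le_lowterm Cij Cjk Cik ui uj uk :
  sstar (@W2 R) Cij Cjk ui uj uk <= lowterm Cij Cjk Cik ui uj uk.
Proof. by rewrite /lowterm le_max; apply/orP; left. Qed.

Lemma upterm_le_sstar_M2 Cij Cjk Cik ui uj uk :
  upterm Cij Cjk Cik ui uj uk <= sstar (@M2 R) Cij Cjk ui uj uk.
Proof. by rewrite /upterm ge_min; apply/orP; left. Qed.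

Lemma upterm_le_sstar_W2 Cij Cjk Cik ui uj uk :
  upterm Cij Cjk Cik ui uj uk <=
  sstar (@W2 R) Cij Cjk ui uj uk + Cik ui uk - astar (@W2 R) Cij Cjk ui uk.
Proof. by rewrite /upterm ge_min; apply/orP; right. Qed.

Lemma CL_ge_sstar_W2 C12 C13 C23 u1 u2 u3 :
  [/\ sstar (@W2 R) C12 C23 u1 u2 u3 <= CL C12 C13 C23 u1 u2 u3,
      sstar (@W2 R) C13 (flip C23) u1 u3 u2 <= CL C12 C13 C23 u1 u2 u3 &
      sstar (@W2 R) (flip C12) C13 u2 u1 u3 <= CL C12 C13 C23 u1 u2 u3].
Proof.
split; [apply: le_trans (sstar_W2_le_lowterm _ _ C13 _ _ _) _|
        apply: le_trans (sstar_W2_le_lowterm _ _ C12 _ _ _) _|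
        apply: le_trans (sstar_W2_le_lowterm _ _ C23 _ _ _) _];
  rewrite /CL le_max; apply/orP; [by left|right..]; rewrite le_max; apply/orP.
- by left.
- by right.
Qed.

Lemma CU_le_sstar C12 C13 C23 u1 u2 u3 :
  [/\ CU C12 C13 C23 u1 u2 u3 <= sstar (@M2 R) C12 C23 u1 u2 u3,
      CU C12 C13 C23 u1 u2 u3 <= sstar (@M2 R) C13 (flip C23) u1 u3 u2 &
      CU C12 C13 C23 u1 u2 u3 <=
      sstar (@W2 R) C12 C23 u1 u2 u3 + C13 u1 u3 - astar (@W2 R) C12 C23 u1 u3].
Proof.
split; [apply: le_trans _ (upterm_le_sstar_M2 _ _ C13 _ _ _)|
        apply: le_trans _ (upterm_le_sstar_M2 _ _ C12 _ _ _)|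
        apply: le_trans _ (upterm_le_sstar_W2 _ _ _ _ _ _)];
  rewrite /CU ge_min; apply/orP; [by left|right|by left].
by rewrite ge_min; apply/orP; left.
Qed.

End copula_star.

Theorem proposition5p1 (R : realType) (C12 C13 C23 : R -> R -> R) :
  is_copula2 C12 -> is_copula2 C13 -> is_copula2 C23 ->
  compatible C12 C13 C23 ->
  forall u1 u2 u3 : R, in01 u1 -> in01 u2 -> in01 u3 ->
    FL C12 C13 C23 u1 u2 u3 <= CL C12 C13 C23 u1 u2 u3 /\
    CU C12 C13 C23 u1 u2 u3 <= FU C12 C13 C23 u1 u2 u3.
Proof.
move=> c12 c13 c23 _ u1 u2 u3 h1 h2 h3.
have U : sstar (@W2 R) C12 C23 u1 u2 u3 + C13 u1 u3 - astar (@W2 R) C12 C23 u1 u3 <=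
    1 - u1 - u2 - u3 + C12 u1 u2 + C13 u1 u3 + C23 u2 u3.
  have := astar_sub_sstar_W2_ge c12 c23 h1 h2 h3.
  (* generalized so that lra treats the integrals as atoms instead of unfolding them *)
  by move: (sstar _ _ _ _ _ _) (astar _ _ _ _ _) => S A; lra.
have c21 := is_copula2_flip c12; have c32 := is_copula2_flip c23.
have [CL123 CL132 CL213] := CL_ge_sstar_W2 C12 C13 C23 u1 u2 u3.
have [CU123 CU132 CUW] := CU_le_sstar C12 C13 C23 u1 u2 u3.
split.
- rewrite /FL !ge_max; apply/and4P; split.
  + exact: le_trans (sstar_W2_ge0 _ _ _ _ _) CL123.
  + apply: le_trans CL213; exact: (sstar_W2_ge c21 c13 h2 h1 h3).
  + exact: le_trans (sstar_W2_ge c12 c23 h1 h2 h3) CL123.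
  + apply: le_trans CL132; exact: (sstar_W2_ge c13 c32 h1 h3 h2).
- rewrite /FU !le_min; apply/and4P; split.
  + exact: le_trans CU123 (sstar_M2_le_l c12 c23 h1 h2 h3).
  + exact: le_trans CU132 (sstar_M2_le_l c13 c32 h1 h3 h2).
  + exact: le_trans CU123 (sstar_M2_le_r c12 c23 h1 h2 h3).
  + exact: le_trans CUW U.
Qed.
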